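(* Let $(H,R)$ be a finite-dimensional quasitriangular Hopf algebra and $\pi:H\to K$ a surjective Hopf algebra map. Let $L=\{((f\circ\pi)\otimes\mathrm{id})(R_{21}\cdot R)\mid f\in K^*\}\subseteq H$, let $L^+=L\cap\ker\epsilon$, let $K'=H/HL^+$ with quotient map $\pi':H\to K'$. Regard $\mathrm{Rep}_f(K)$ and $\mathrm{Rep}_f(K')$ as full braided tensor subcategories of $\mathrm{Rep}_f(H)$ via pullback along $\pi$ and $\pi'$. Then $\mathrm{Rep}_f(K')$ is the relative Müger centralizer of $\mathrm{Rep}_f(K)$ in $\mathrm{Rep}_f(H)$, i.e. a finite-dimensional $H$-module $Y$ lies in $\mathrm{Rep}_f(K')$ if and only if $c_{Y,X}c_{X,Y}=\mathrm{id}_{X\otimes Y}$ for all $X\in\mathrm{Rep}_f(K)$.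
   Context: $(H,R)$ quasitriangular: $R=\sum_iR_i\otimes R^i$ invertible with $(\Delta\otimes\mathrm{id})(R)=R_{13}R_{23}$, $(\mathrm{id}\otimes\Delta)(R)=R_{13}R_{12}$, $\tau\Delta(h)=R\Delta(h)R^{-1}$. $R_{21}=\sum_iR^i\otimes R_i$ and $R_{21}\cdot R$ is the product in $H\otimes H$. $L$ is a normal left coideal subalgebra of $H$, so $HL^+$ is a Hopf ideal and $K'$ is a quotient Hopf algebra. $\mathrm{Rep}_f(H)$ is the braided tensor category of finite-dimensional left $H$-modules with braiding $c_{X,Y}(x\otimes y)=\sum_iR^iy\otimes R_ix$; $K$ and $K'$ carry the quasitriangular structures $(\pi\otimes\pi)(R)$ and $(\pi'\otimes\pi')(R)$. *)

(* Finite-dimensional Hopf algebras over a field F are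
   encoded by structure constants with respect to a basis e_0..e_{n-1}.
   Elements of H are row vectors 'rV[F]_n (coordinates); elements of
   H (x) H are matrices 'M[F]_(n,n): T stands for sum_{a,b} T a b e_a (x) e_b. *)
From HB Require Import structures.
From mathcomp Require Import all_boot all_algebra.
Set Implicit Arguments. Unset Strict Implicit. Unset Printing Implicit Defensive.
Import GRing.Theory.
Local Open Scope ring_scope.

Record hopf_data (F : fieldType) (n : nat) := HopfData {
  hmul : 'I_n -> 'I_n -> 'rV[F]_n;
  hunit : 'rV[F]_n;
  hcomul : 'I_n -> 'M[F]_(n, n);
  hcounit : 'I_n -> F;
  hantipode : 'I_n -> 'rV[F]_n }.

Section Hopf.
Variables (F : fieldType) (n : nat) (H : hopf_data F n).

Definition basisv (i : 'I_n) : 'rV[F]_n := delta_mx 0 i.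
Definition mulv (a b : 'rV[F]_n) : 'rV[F]_n :=
  \sum_i \sum_j (a 0 i * b 0 j) *: hmul H i j.
Definition comulv (a : 'rV[F]_n) : 'M[F]_(n, n) := \sum_i a 0 i *: hcomul H i.
Definition counitv (a : 'rV[F]_n) : F := \sum_i a 0 i * hcounit H i.
Definition antipodev (a : 'rV[F]_n) : 'rV[F]_n := \sum_i a 0 i *: hantipode H i.
Definition tens (a b : 'rV[F]_n) : 'M[F]_(n, n) := a^T *m b.
Definition mulT (T U : 'M[F]_(n, n)) : 'M[F]_(n, n) :=
  \sum_i \sum_j \sum_k \sum_l (T i j * U k l) *: tens (hmul H i k) (hmul H j l).
Definition oneT : 'M[F]_(n, n) := tens (hunit H) (hunit H).

Definition is_hopf : Prop :=
  (forall a b c, mulv (mulv a b) c = mulv a (mulv b c)) /\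
  (forall a, mulv (hunit H) a = a /\ mulv a (hunit H) = a) /\
  (* coassociativity, coordinatewise in H (x) H (x) H *)
  (forall i a b c, \sum_j hcomul H i j c * hcomul H j a b
                   = \sum_j hcomul H i a j * hcomul H j b c) /\
  (forall i k, \sum_j hcounit H j * hcomul H i j k = (i == k)%:R /\
               \sum_j hcounit H j * hcomul H i k j = (i == k)%:R) /\
  (forall i j, comulv (hmul H i j) = mulT (hcomul H i) (hcomul H j)) /\
  comulv (hunit H) = oneT /\
  (forall i j, counitv (hmul H i j) = hcounit H i * hcounit H j) /\
  counitv (hunit H) = 1 /\
  (forall i, \sum_a \sum_b hcomul H i a b *: mulv (hantipode H a) (basisv b)
             = hcounit H i *: hunit H /\
             \sum_a \sum_b hcomul H i a b *: mulv (basisv a) (hantipode H b)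
             = hcounit H i *: hunit H).

(* R = sum_{a,b} R a b e_a (x) e_b ; R_21 corresponds to R^T, tau to transposition *)
Definition quasitriangular (R : 'M[F]_(n, n)) : Prop :=
  (exists Ri : 'M[F]_(n, n),
     mulT R Ri = oneT /\ mulT Ri R = oneT /\
     (forall h, mulT (mulT R (comulv h)) Ri = (comulv h)^T)) /\
  (* (Delta (x) id)(R) = R_13 R_23 *)
  (forall a b c, \sum_i R i c * hcomul H i a b
                 = \sum_q \sum_s R a q * R b s * hmul H q s 0 c) /\
  (* (id (x) Delta)(R) = R_13 R_12 *)
  (forall a b c, \sum_q R a q * hcomul H q b c
                 = \sum_p \sum_r R p c * R r b * hmul H p r 0 a).

(* finite-dimensional left H-modules: F^p (column vectors), with e_i acting by act i *)
Definition actv (p : nat) (act : 'I_n -> 'M[F]_p) (a : 'rV[F]_n) : 'M[F]_p :=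
  \sum_i a 0 i *: act i.
Definition is_module (p : nat) (act : 'I_n -> 'M[F]_p) : Prop :=
  actv act (hunit H) = 1%:M /\
  (forall a b, actv act (mulv a b) = actv act a *m actv act b).

End Hopf.

(* X (x) Y for X = F^m, Y = F^p is 'M_(m,p), with x (x) y := x *m y^T.
   braiding c_{X,Y}(x (x) y) = sum_i R^i y (x) R_i x  (R = sum_i R_i (x) R^i). *)
Definition braid (F : fieldType) (n m p : nat) (R : 'M[F]_(n, n))
    (X : 'I_n -> 'M[F]_m) (Y : 'I_n -> 'M[F]_p) (Z : 'M[F]_(m, p)) : 'M[F]_(p, m) :=
  \sum_a \sum_b R a b *: (Y b *m Z^T *m (X a)^T).

(* Hopf algebra map pi : H -> K, pi(x) = x *m P *)
Definition hopf_map (F : fieldType) (n k : nat) (H : hopf_data F n)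
    (K : hopf_data F k) (P : 'M[F]_(n, k)) : Prop :=
  (forall a b, mulv H a b *m P = mulv K (a *m P) (b *m P)) /\
  hunit H *m P = hunit K /\
  (forall a, comulv K (a *m P) = P^T *m comulv H a *m P) /\
  (forall a, counitv K (a *m P) = counitv H a) /\
  (forall a, antipodev H a *m P = antipodev K (a *m P)).

Definition pullback (F : fieldType) (n k m : nat) (P : 'M[F]_(n, k))
    (X : 'I_k -> 'M[F]_m) : 'I_n -> 'M[F]_m :=
  fun j => \sum_l P j l *: X l.

Section Lsub.
Variables (F : fieldType) (n k : nat) (H : hopf_data F n)
          (R : 'M[F]_(n, n)) (P : 'M[F]_(n, k)).
(* f in K^* is a column vector f, f(y) = y *m f;
   ((f o pi) (x) id)(R_21 R) *)
Definition Lelt (f : 'cV[F]_k) : 'rV[F]_n := (P *m f)^T *m mulT H R^T R.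
Definition in_L (x : 'rV[F]_n) : Prop := exists f, x = Lelt f.
Definition in_Lplus (x : 'rV[F]_n) : Prop := in_L x /\ counitv H x = 0.
Definition in_HLplus (x : 'rV[F]_n) : Prop :=
  exists (N : nat) (hs ls : 'I_N -> 'rV[F]_n),
    (forall t, in_Lplus (ls t)) /\ x = \sum_t mulv H (hs t) (ls t).
(* Y lies in Rep_f(K'), K' = H / H L^+: the action factors through
   pi' : H -> H/HL^+, i.e. ker pi' = H L^+ acts by zero *)
Definition in_Rep_quot (p : nat) (Y : 'I_n -> 'M[F]_p) : Prop :=
  forall x, in_HLplus x -> actv Y x = 0.
End Lsub.

From HB Require Import structures.
From mathcomp Require Import all_boot all_algebra ring.
Set Implicit Arguments. Unset Strict Implicit. Unset Printing Implicit Defensive.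
Import GRing.Theory.
Local Open Scope ring_scope.

(* Let Q = R_21 R.  The double braiding c_{Y,X} c_{X,Y} is the action of Q on
   X (x) Y, and for X pulled back from K it becomes z |-> sum_l x_l z Y(L_l),
   where L_l = ((e_l^* o pi) (x) id)(Q) span L.  Since (eps (x) id)(R) and
   (id (x) eps)(R) are idempotents with a left inverse, both equal 1; hence
   eps(((f o pi) (x) id)(Q)) = f(1), and ((eps_K o pi) (x) id)(Q) = 1.  So the
   double braiding is trivial for every X iff each l in L acts on Y by the
   scalar eps(l) (test on the regular K-module for the converse), which in turn
   holds iff L^+, equivalently H L^+ = ker pi', acts by zero. *)

Section Actions.
Variables (F : fieldType) (n : nat).

Lemma actv_is_linear p (act : 'I_n -> 'M[F]_p) : linear (actv act).
Proof.
move=> c a b; rewrite /actv scaler_sumr -big_split /=; apply: eq_bigr => i _.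
by rewrite !mxE scalerDl scalerA.
Qed.

HB.instance Definition _ p (act : 'I_n -> 'M[F]_p) :=
  GRing.isLinear.Build F 'rV[F]_n 'M[F]_p _ (actv act) (actv_is_linear act).

Lemma actv_basis p (act : 'I_n -> 'M[F]_p) i : actv act (basisv F i) = act i.
Proof.
rewrite /actv (bigD1 i) //= big1 ?addr0 => [|j /negbTE neq_ji].
  by rewrite !mxE !eqxx scale1r.
by rewrite mxE neq_ji andbF scale0r.
Qed.

Variable H : hopf_data F n.

Lemma mulv_basis i j : mulv H (basisv F i) (basisv F j) = hmul H i j.
Proof.
rewrite /mulv (bigD1 i) //= (bigD1 j) //= !big1 ?addr0.
- by rewrite !mxE !eqxx mul1r scale1r.
- by move=> i' /negbTE neq_i; apply: big1 => j' _; rewrite !mxE neq_i andbF mul0r scale0r.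
- by move=> j' /negbTE neq_j; rewrite !mxE neq_j andbF mulr0 scale0r.
Qed.

Lemma actv_hmul p (act : 'I_n -> 'M[F]_p) i j : is_module H act ->
  actv act (hmul H i j) = act i *m act j.
Proof. by move=> [_ actM]; rewrite -mulv_basis actM !actv_basis. Qed.

Lemma mulv_basisr a j : mulv H a (basisv F j) = \sum_i a 0 i *: hmul H i j.
Proof.
apply: eq_bigr => i _; rewrite (bigD1 j) //= big1 ?addr0.
  by rewrite !mxE !eqxx mulr1.
by move=> j' /negbTE neq_j; rewrite !mxE neq_j andbF mulr0 scale0r.
Qed.

Lemma mulv_sum_basisr a b : mulv H a b = \sum_j b 0 j *: mulv H a (basisv F j).
Proof.
under [RHS]eq_bigr do rewrite mulv_basisr scaler_sumr.
rewrite /mulv exchange_big /=; apply: eq_bigr => j _; apply: eq_bigr => i _.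
by rewrite scalerA mulrC.
Qed.

End Actions.

Section Counit.
Variables (F : fieldType) (n : nat) (H : hopf_data F n).

Definition counit_row : 'rV[F]_n := \row_i hcounit H i.
Definition eps_id (T : 'M[F]_n) : 'rV[F]_n := counit_row *m T.
Definition id_eps (T : 'M[F]_n) : 'rV[F]_n := eps_id T^T.

Lemma counitvE a : counitv H a = (a *m counit_row^T) 0 0.
Proof. by rewrite /counitv mxE; apply: eq_bigr => i _; rewrite !mxE. Qed.

Lemma eps_id_tens a b : eps_id (tens a b) = counitv H a *: b.
Proof.
rewrite /eps_id /tens mulmxA -mul_scalar_mx; congr (_ *m _).
apply/matrixP => i j; rewrite !ord1 !mxE counitvE !mxE eqxx mulr1n.
by apply: eq_bigr => k _; rewrite !mxE mulrC.
Qed.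

Lemma counitv_basis i : counitv H (basisv F i) = hcounit H i.
Proof.
rewrite /counitv (bigD1 i) //= big1 ?addr0 => [|j /negbTE neq_ji].
  by rewrite !mxE !eqxx mul1r.
by rewrite !mxE neq_ji andbF mul0r.
Qed.

Lemma trmx_tens (a b : 'rV[F]_n) : (tens a b)^T = tens b a.
Proof. by rewrite /tens trmx_mul trmxK. Qed.

Lemma trmx_mulT T U : (mulT H T U)^T = mulT H T^T U^T.
Proof.
rewrite /mulT !linear_sum /= exchange_big /=; apply: eq_bigr => j _.
rewrite linear_sum; apply: eq_bigr => i _.
rewrite linear_sum /= exchange_big /=; apply: eq_bigr => l _.
rewrite linear_sum; apply: eq_bigr => k _.
by rewrite linearZ /= trmx_tens !mxE.
Qed.

Lemma eps_id_oneT : counitv H (hunit H) = 1 -> eps_id (oneT H) = hunit H.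
Proof. by move=> counit1; rewrite /oneT eps_id_tens counit1 scale1r. Qed.

Lemma id_eps_oneT : counitv H (hunit H) = 1 -> id_eps (oneT H) = hunit H.
Proof. by move=> counit1; rewrite /id_eps /oneT trmx_tens eps_id_oneT. Qed.

Hypothesis counit_hmul :
  forall i j, counitv H (hmul H i j) = hcounit H i * hcounit H j.

Lemma eps_id_mulT T U : eps_id (mulT H T U) = mulv H (eps_id T) (eps_id U).
Proof.
rewrite /mulT /eps_id /mulv mulmx_sumr.
under eq_bigr do rewrite mulmx_sumr; under eq_bigr do under eq_bigr do rewrite mulmx_sumr.
under eq_bigr do under eq_bigr do under eq_bigr do rewrite mulmx_sumr.
under eq_bigr do under eq_bigr do under eq_bigr do under eq_bigr do
  rewrite -scalemxAr -/(eps_id _) eps_id_tens counit_hmul scalerA.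
symmetry; rewrite [RHS]exchange_big /=; apply: eq_bigr => j _.
under [RHS]eq_bigr do rewrite exchange_big /=.
rewrite [RHS]exchange_big /=; apply: eq_bigr => l _.
rewrite !mxE mulr_suml scaler_suml; apply: eq_bigr => i _.
rewrite mulr_sumr scaler_suml; apply: eq_bigr => k _.
by rewrite !mxE; congr (_ *: _); ring.
Qed.

Lemma id_eps_mulT T U : id_eps (mulT H T U) = mulv H (id_eps T) (id_eps U).
Proof. by rewrite /id_eps trmx_mulT eps_id_mulT. Qed.

End Counit.

Definition monodromy (F : fieldType) (n : nat) (H : hopf_data F n) (R : 'M[F]_n) :
  'M[F]_n := mulT H R^T R.

Section CounitR.
Variables (F : fieldType) (n : nat) (H : hopf_data F n) (R : 'M[F]_n).

Hypothesis mulvA : forall a b c, mulv H (mulv H a b) c = mulv H a (mulv H b c).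
Hypothesis mulv_unit : forall a, mulv H (hunit H) a = a /\ mulv H a (hunit H) = a.
Hypothesis counit_comul :
  forall i k, \sum_j hcounit H j * hcomul H i j k = (i == k)%:R.
Hypothesis counit_hmul :
  forall i j, counitv H (hmul H i j) = hcounit H i * hcounit H j.
Hypothesis counit_unit : counitv H (hunit H) = 1.
Hypothesis R_linv : exists Ri, mulT H Ri R = oneT H.
Hypothesis comul_id_R : forall a b c, \sum_i R i c * hcomul H i a b
  = \sum_q \sum_s R a q * R b s * hmul H q s 0 c.
Hypothesis id_comul_R : forall a b c, \sum_q R a q * hcomul H q b c
  = \sum_p \sum_r R p c * R r b * hmul H p r 0 a.

Lemma idem_linv_unit w u : mulv H w u = hunit H -> mulv H u u = u -> u = hunit H.
Proof. by move=> wu uu; rewrite -[u](proj1 (mulv_unit u)) -wu mulvA uu. Qed.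

Lemma mulv_eps_idE (A B : 'M[F]_n) c :
  mulv H (eps_id H A) (eps_id H B) 0 c =
  \sum_a \sum_b (hcounit H a * hcounit H b) *
     \sum_q \sum_s A a q * B b s * hmul H q s 0 c.
Proof.
rewrite /mulv summxE.
rewrite (eq_bigr (fun q => \sum_s \sum_a \sum_b
  hcounit H a * hcounit H b * (A a q * B b s * hmul H q s 0 c))); last first.
  move=> q _; rewrite summxE; apply: eq_bigr => s _.
  rewrite !mxE mulr_suml mulr_suml; apply: eq_bigr => a _.
  rewrite mulr_sumr mulr_suml; apply: eq_bigr => b _; rewrite !mxE; ring.
rewrite exchange_big /=.
under eq_bigr do rewrite exchange_big /=.
rewrite exchange_big /=; apply: eq_bigr => a _.
under eq_bigr do rewrite exchange_big /=.
rewrite exchange_big /=; apply: eq_bigr => b _.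
rewrite mulr_sumr exchange_big /=; apply: eq_bigr => q _.
by rewrite mulr_sumr.
Qed.

Lemma sum_mulr_delta (f : 'I_n -> F) b : \sum_i f i * (i == b)%:R = f b.
Proof.
by rewrite (bigD1 b) //= eqxx mulr1 big1 ?addr0 // => i /negbTE ->; rewrite mulr0.
Qed.

(* Apply [eps (x) eps (x) id] to [(Delta (x) id)(R) = R_13 R_23]. *)
Lemma eps_id_R_idem : mulv H (eps_id H R) (eps_id H R) = eps_id H R.
Proof.
apply/rowP => c; rewrite mulv_eps_idE.
under eq_bigr do under eq_bigr do rewrite -comul_id_R.
rewrite exchange_big /= !mxE; apply: eq_bigr => b _.
rewrite (eq_bigr (fun a => hcounit H b * \sum_i R i c * (hcounit H a * hcomul H i a b)));
  last by move=> a _; rewrite !mulr_sumr; apply: eq_bigr => i _; ring.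
rewrite -mulr_sumr exchange_big /=.
under eq_bigr do rewrite -mulr_sumr counit_comul.
by rewrite sum_mulr_delta mxE mulrC.
Qed.

Lemma id_eps_R_idem : mulv H (id_eps H R) (id_eps H R) = id_eps H R.
Proof.
apply/rowP => c; rewrite /id_eps mulv_eps_idE.
rewrite (eq_bigr (fun a => \sum_b hcounit H a * hcounit H b *
  \sum_q R c q * hcomul H q b a)); last first.
  move=> a _; apply: eq_bigr => b _; rewrite id_comul_R; congr (_ * _).
  by apply: eq_bigr => p _; apply: eq_bigr => r _; rewrite !mxE.
rewrite !mxE; apply: eq_bigr => a _.
rewrite (eq_bigr (fun b => hcounit H a * \sum_q R c q * (hcounit H b * hcomul H q b a)));
  last by move=> b _; rewrite !mulr_sumr; apply: eq_bigr => i _; ring.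
rewrite -mulr_sumr exchange_big /=.
under eq_bigr do rewrite -mulr_sumr counit_comul.
by rewrite sum_mulr_delta !mxE.
Qed.

Lemma eps_id_R : eps_id H R = hunit H.
Proof.
have [Ri RiR] := R_linv.
apply: (idem_linv_unit (w := eps_id H Ri)) eps_id_R_idem.
by rewrite -eps_id_mulT // RiR eps_id_oneT.
Qed.

Lemma id_eps_R : id_eps H R = hunit H.
Proof.
have [Ri RiR] := R_linv.
apply: (idem_linv_unit (w := id_eps H Ri)) id_eps_R_idem.
by rewrite -id_eps_mulT // RiR id_eps_oneT.
Qed.

Lemma eps_id_monodromy : eps_id H (monodromy H R) = hunit H.
Proof.
rewrite /monodromy eps_id_mulT // -/(id_eps H R) id_eps_R eps_id_R.
exact: (proj1 (mulv_unit _)).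
Qed.

Lemma id_eps_monodromy : id_eps H (monodromy H R) = hunit H.
Proof.
rewrite /monodromy id_eps_mulT // {1}/id_eps trmxK id_eps_R eps_id_R.
exact: (proj1 (mulv_unit _)).
Qed.

End CounitR.

Section Braiding.
Variables (F : fieldType) (n m p : nat) (X : 'I_n -> 'M[F]_m) (Y : 'I_n -> 'M[F]_p).

Definition tens_act (Z : 'M[F]_(m, p)) (T : 'M[F]_n) : 'M[F]_(m, p) :=
  \sum_a \sum_b T a b *: (X a *m Z *m (Y b)^T).

Lemma tens_act_is_linear Z : linear (tens_act Z).
Proof.
move=> c T U; rewrite /tens_act scaler_sumr -big_split /=; apply: eq_bigr => a _.
rewrite scaler_sumr -big_split /=; apply: eq_bigr => b _.
by rewrite !mxE scalerDl scalerA.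
Qed.

HB.instance Definition _ Z :=
  GRing.isLinear.Build F 'M[F]_n 'M[F]_(m, p) _ (tens_act Z) (tens_act_is_linear Z).

Lemma tens_act_tens Z u v : tens_act Z (tens u v) = actv X u *m Z *m (actv Y v)^T.
Proof.
rewrite /tens_act /actv !mulmx_suml; apply: eq_bigr => a _.
rewrite linear_sum /= mulmx_sumr; apply: eq_bigr => b _.
by rewrite /tens mxE big_ord1 !mxE linearZ /= -!scalemxAl -scalemxAr scalerA.
Qed.

Lemma double_braid (H : hopf_data F n) R Z : is_module H X -> is_module H Y ->
  braid R Y X (braid R X Y Z) = tens_act Z (monodromy H R).
Proof.
move=> modX modY.
rewrite /monodromy /mulT [RHS]linear_sum /braid exchange_big /=; apply: eq_bigr => i _.
rewrite [RHS]linear_sum; apply: eq_bigr => j _.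
rewrite linear_sum /= mulmx_sumr mulmx_suml scaler_sumr [RHS]linear_sum.
apply: eq_bigr => k _.
rewrite linear_sum /= mulmx_sumr mulmx_suml scaler_sumr [RHS]linear_sum.
apply: eq_bigr => l _.
rewrite [RHS]linearZ /= tens_act_tens !actv_hmul // !mxE.
by rewrite linearZ /= !trmx_mul !trmxK -scalemxAr -scalemxAl scalerA !mulmxA.
Qed.

End Braiding.

Section Pullback.
Variables (F : fieldType) (n k : nat) (H : hopf_data F n) (K : hopf_data F k).
Variable P : 'M[F]_(n, k).

Lemma actv_pullback m (X : 'I_k -> 'M[F]_m) a :
  actv (pullback P X) a = actv X (a *m P).
Proof.
rewrite /actv /pullback.
under eq_bigr do rewrite scaler_sumr.
rewrite exchange_big /=; apply: eq_bigr => l _.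
by rewrite !mxE scaler_suml; apply: eq_bigr => i _; rewrite scalerA.
Qed.

Lemma tens_act_pullback m p (X : 'I_k -> 'M[F]_m) (Y : 'I_n -> 'M[F]_p) Z T :
  tens_act (pullback P X) Y Z T = \sum_l X l *m Z *m (actv Y ((col l P)^T *m T))^T.
Proof.
rewrite /tens_act /pullback.
rewrite (eq_bigr (fun a => \sum_b \sum_l (T a b * P a l) *: (X l *m Z *m (Y b)^T)));
  last first.
  move=> a _; apply: eq_bigr => b _.
  rewrite !mulmx_suml scaler_sumr; apply: eq_bigr => l _.
  by rewrite -!scalemxAl scalerA.
under eq_bigr do rewrite exchange_big /=.
rewrite exchange_big /=; apply: eq_bigr => l _.
rewrite /actv linear_sum /= mulmx_sumr exchange_big /=; apply: eq_bigr => b _.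
rewrite linearZ /= -scalemxAr !mxE scaler_suml; apply: eq_bigr => a _.
by rewrite !mxE mulrC.
Qed.

Hypothesis hmP : hopf_map H K P.

Lemma pullback_module m (X : 'I_k -> 'M[F]_m) : is_module K X -> is_module H (pullback P X).
Proof.
case: hmP => [hmulP [hunitP _]] [unitX mulX]; split.
  by rewrite actv_pullback hunitP.
by move=> a b; rewrite !actv_pullback hmulP mulX.
Qed.

Lemma counit_row_pullback : counit_row K *m P^T = counit_row H.
Proof.
case: hmP => [_ [_ [_ [counitP _]]]].
apply/rowP => i; rewrite [RHS]mxE -counitv_basis -counitP.
rewrite -[basisv F i *m P]/(delta_mx 0 i *m P) -rowE /counitv !mxE.
apply: eq_bigr => l _.
by rewrite !mxE mulrC.
Qed.
End Pullback.

Section Regular.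
Variables (F : fieldType) (k : nat) (K : hopf_data F k).

Definition regular_rep (l : 'I_k) : 'M[F]_k := \matrix_(c, b) hmul K l b 0 c.

Lemma actv_regular_rep a :
  actv regular_rep a = \matrix_(c, b) mulv K a (basisv F b) 0 c.
Proof.
apply/matrixP => c b; rewrite [RHS]mxE mulv_basisr /actv !summxE.
by apply: eq_bigr => l _; rewrite !mxE.
Qed.

Hypothesis mulvA : forall a b c, mulv K (mulv K a b) c = mulv K a (mulv K b c).
Hypothesis mulv_unit : forall a, mulv K (hunit K) a = a /\ mulv K a (hunit K) = a.

Lemma regular_rep_module : is_module K regular_rep.
Proof.
split=> [|a b]; apply/matrixP => c j; rewrite actv_regular_rep !mxE.
  by rewrite (proj1 (mulv_unit _)) mxE eq_sym.
rewrite mulvA (mulv_sum_basisr K a) summxE; apply: eq_bigr => d _.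
by rewrite !actv_regular_rep !mxE mulrC.
Qed.

Lemma regular_rep_unit l : regular_rep l *m (hunit K)^T = delta_mx l 0.
Proof.
apply/matrixP => c j; rewrite ord1 -(actv_basis regular_rep) actv_regular_rep.
have -> : (delta_mx l 0 : 'cV[F]_k) c 0 = basisv F l 0 c by rewrite !mxE eqxx andbT.
rewrite -{2}(proj2 (mulv_unit (basisv F l))) mulv_sum_basisr !mxE summxE.
by apply: eq_bigr => b _; rewrite !mxE mulrC.
Qed.

End Regular.

Section Centralizer.
Variables (F : fieldType) (n k : nat) (H : hopf_data F n) (K : hopf_data F k).
Variables (R : 'M[F]_n) (P : 'M[F]_(n, k)).
Hypotheses (hopfH : is_hopf H) (hopfK : is_hopf K).
Hypotheses (qtR : quasitriangular H R) (hmP : hopf_map H K P).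

Let monodromy_counit :
  eps_id H (monodromy H R) = hunit H /\ id_eps H (monodromy H R) = hunit H.
Proof.
have [mulvA [mulv_unit [_ [counit_comul [_ [_ [counit_hmul [counit_unit _]]]]]]]] := hopfH.
have [[Ri [_ [RiR _]]] [comul_id_R id_comul_R]] := qtR.
have counitL i j := proj1 (counit_comul i j).
split; [apply: eps_id_monodromy | apply: id_eps_monodromy];
  by [|exists Ri].
Qed.

Lemma Lelt_is_linear : linear (Lelt H R P).
Proof.
by move=> c f g; rewrite /Lelt mulmxDr -scalemxAr linearD linearZ /= mulmxDl -scalemxAl.
Qed.

HB.instance Definition _ :=
  GRing.isLinear.Build F 'cV[F]_k 'rV[F]_n _ (Lelt H R P) Lelt_is_linear.

Lemma counitv_Lelt f : counitv H (Lelt H R P f) = (hunit K *m f) 0 0.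
Proof.
have [_ [hunitP _]] := hmP.
rewrite counitvE /Lelt -/(monodromy H R) -mulmxA.
have -> : monodromy H R *m (counit_row H)^T = (hunit H)^T.
  by rewrite -(proj2 monodromy_counit) /id_eps /eps_id trmx_mul trmxK.
by rewrite -trmx_mul mxE mulmxA hunitP.
Qed.

Lemma Lelt_counit : Lelt H R P (counit_row K)^T = hunit H.
Proof.
by rewrite /Lelt trmx_mul trmxK (counit_row_pullback hmP) -(proj1 monodromy_counit).
Qed.

Lemma hunit_mul_counit_row : hunit K *m (counit_row K)^T = 1%:M.
Proof.
apply/matrixP => i j; rewrite !ord1 -counitvE [RHS]mxE eqxx.
by case: hopfK => _ [_ [_ [_ [_ [_ [_ [-> _]]]]]]].
Qed.

Lemma in_HLplus_Lplus x : in_Lplus H R P x -> in_HLplus H R P x.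
Proof.
move=> Lx; exists 1%N, (fun=> hunit H), (fun=> x); split=> [//|].
by rewrite big_ord1 (proj1 (proj1 (proj2 hopfH) x)).
Qed.

Section Module.
Variables (p : nat) (Y : 'I_n -> 'M[F]_p).
Hypothesis modY : is_module H Y.

Definition L_acts_by_counit : Prop :=
  forall f, actv Y (Lelt H R P f) = counitv H (Lelt H R P f) *: 1%:M.

Lemma in_Rep_quotE : in_Rep_quot H R P Y <-> L_acts_by_counit.
Proof.
split=> [YHL f | YL x [N [hs [ls [Lls ->]]]]].
  set c := counitv H (Lelt H R P f).
  have Lplus : in_Lplus H R P (Lelt H R P (f - c *: (counit_row K)^T)).
    split; first by eexists.
    rewrite counitv_Lelt mulmxBr -scalemxAr hunit_mul_counit_row.
    by rewrite /c counitv_Lelt !mxE eqxx mulr1 subrr.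
  move/in_HLplus_Lplus/YHL: Lplus.
  rewrite linearB linearZ /= Lelt_counit linearB linearZ /= (proj1 modY).
  by move/eqP; rewrite subr_eq0 => /eqP.
rewrite linear_sum /=; apply: big1 => t _.
have [[f ->] counit0] := Lls t.
by rewrite (proj2 modY) YL counit0 scale0r mulmx0.
Qed.

Definition centralizes_pullbacks : Prop :=
  forall (m : nat) (X : 'I_k -> 'M[F]_m), is_module K X ->
  forall Z : 'M[F]_(m, p), braid R Y (pullback P X) (braid R (pullback P X) Y Z) = Z.

Lemma double_braid_pullback m (X : 'I_k -> 'M[F]_m) Z : is_module K X ->
  braid R Y (pullback P X) (braid R (pullback P X) Y Z)
  = \sum_l X l *m Z *m (actv Y (Lelt H R P (delta_mx l 0)))^T.
Proof.
move=> modX; rewrite (double_braid R Z (pullback_module hmP modX) modY) tens_act_pullback.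
by apply: eq_bigr => l _; rewrite colE.
Qed.

Lemma L_acts_by_counitE : L_acts_by_counit <->
  forall l, actv Y (Lelt H R P (delta_mx l 0)) = hunit K 0 l *: 1%:M.
Proof.
split=> [YL l | YL f].
  by rewrite YL counitv_Lelt -colE mxE.
rewrite counitv_Lelt {1}(matrix_sum_delta f) linear_sum /= linear_sum /= mxE.
rewrite scaler_suml; apply: eq_bigr => l _.
by rewrite big_ord1 !linearZ /= YL scalerA mulrC.
Qed.

Lemma centralizesE : centralizes_pullbacks <-> L_acts_by_counit.
Proof.
have [mulvA [mulv_unit _]] := hopfK.
split=> [centr | /L_acts_by_counitE YL m X modX Z].
  apply/L_acts_by_counitE => l; apply/matrixP => j i.
  have := centr k _ (regular_rep_module mulvA mulv_unit) ((hunit K)^T *m delta_mx 0 i).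
  rewrite double_braid_pullback; last exact: regular_rep_module.
  move/(congr1 (fun A : 'M[F]_(k, p) => A l j)).
  under eq_bigr do rewrite mulmxA (regular_rep_unit mulv_unit) -mulmxA -rowE.
  rewrite summxE (bigD1 l) //= big1 => [|l' neq_l]; last first.
    by rewrite mxE big_ord1 mxE eq_sym (negbTE neq_l) mul0r.
  rewrite addr0 mxE big_ord1 mxE eqxx mul1r mxE mxE => ->.
  by rewrite mxE big_ord1 !mxE eq_sym.
rewrite double_braid_pullback //.
under eq_bigr do rewrite YL linearZ /= trmx1 -scalemxAr mulmx1 scalemxAl.
by rewrite -mulmx_suml -/(actv X (hunit K)) (proj1 modX) mul1mx.
Qed.

End Module.

End Centralizer.

Theorem mainTheorem3 (F : fieldType) (n k : nat) (H : hopf_data F n)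
    (K : hopf_data F k) (R : 'M[F]_(n, n)) (P : 'M[F]_(n, k)) :
  is_hopf H -> is_hopf K -> quasitriangular H R -> hopf_map H K P ->
  (forall y : 'rV[F]_k, exists x : 'rV[F]_n, x *m P = y) ->
  forall (p : nat) (Y : 'I_n -> 'M[F]_p), is_module H Y ->
  (in_Rep_quot H R P Y <->
   forall (m : nat) (X : 'I_k -> 'M[F]_m), is_module K X ->
     forall Z : 'M[F]_(m, p),
       braid R Y (pullback P X) (braid R (pullback P X) Y Z) = Z).
Proof.
move=> hopfH hopfK qtR hmP _ p Y modY.
apply: iff_trans (in_Rep_quotE hopfH hopfK qtR hmP modY) _.
exact: iff_sym (centralizesE hopfH hopfK qtR hmP modY).
Qed.
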